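(* Let $C_2>0$, $\rho=C_1\in\{1,-1\}$, $L>0$, $I=[0,L]$, and $Z(z)=\frac{1}{2C_2}(1-e^{-2C_2z})$, $T(z,t)=e^{-C_2z}t$, $\widetilde I=Z(I)$. Let $Q(Z,T)$ be a solution on $\widetilde I$ of $iQ_Z+Q_{TT}+\rho|Q|^2Q=0$ and let $v(z,t)=e^{i\frac{C_2}{4}t^2-\frac{C_2}{2}z}Q(Z(z),T(z,t))$, which is a solution on $I$ of $$iv_z+v_{tt}+C_1e^{-C_2z}|v|^2v+\frac{C_2^2}{4}t^2v=0 .$$ Then $t\mapsto t^2v(z,t)$ belongs to $L^2(\mathbb{R})$ for every $z\in I$ if and only if $T\mapsto T^2Q(Z,T)$ belongs to $L^2(\mathbb{R})$ for every $Z\in\widetilde I$. *)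

(* R : realType. Complex-valued functions are
   represented by their real and imaginary parts. *)
From HB Require Import structures.
From mathcomp Require Import all_boot all_order all_algebra.
From mathcomp Require Import all_classical all_reals all_analysis.
Set Implicit Arguments. Unset Strict Implicit. Unset Printing Implicit Defensive.
Import Order.TTheory GRing.Theory Num.Theory.
Import numFieldNormedType.Exports.
Local Open Scope classical_set_scope.
Local Open Scope ring_scope.

Definition Zmap {R : realType} (C2 z : R) : R :=
  (1 - expR (- (2 * C2 * z))) / (2 * C2).

Definition Tmap {R : realType} (C2 z t : R) : R := expR (- (C2 * z)) * t.

Definition Itilde {R : realType} (C2 L : R) : set R :=
  [set Zmap C2 z | z in `[0, L]].

Definition L2c {R : realType} (fr fi : R -> R) : Prop :=
  measurable_fun setT fr /\ measurable_fun setT fi /\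
  (lebesgue_measure).-integrable setT (fun x => ((fr x) ^+ 2 + (fi x) ^+ 2)%:E).

(* Q = qr + i qi is a (classical) solution on I~ of
     i Q_Z + Q_TT + rho |Q|^2 Q = 0,
   written in real and imaginary parts:
     Re:  - (qi)_Z + (qr)_TT + rho (qr^2+qi^2) qr = 0
     Im:    (qr)_Z + (qi)_TT + rho (qr^2+qi^2) qi = 0
   The equation is required at every interior point Z of I~ and every T. *)
Definition NLS_solution {R : realType} (rho C2 L : R) (qr qi : R -> R -> R) : Prop :=
  forall Zv Tv : R, 0 < Zv < Zmap C2 L ->
    (derivable (fun x => qr x Tv) Zv 1 /\ derivable (fun x => qi x Tv) Zv 1) /\
    (derivable (fun y => qr Zv y) Tv 1 /\ derivable (fun y => qi Zv y) Tv 1) /\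
    (derivable (derive1 (fun y => qr Zv y)) Tv 1 /\ derivable (derive1 (fun y => qi Zv y)) Tv 1) /\
    (- (derive1 (fun x => qi x Tv)) Zv + (derive1n 2 (fun y => qr Zv y)) Tv
       + rho * ((qr Zv Tv) ^+ 2 + (qi Zv Tv) ^+ 2) * qr Zv Tv = 0) /\
    ((derive1 (fun x => qr x Tv)) Zv + (derive1n 2 (fun y => qi Zv y)) Tv
       + rho * ((qr Zv Tv) ^+ 2 + (qi Zv Tv) ^+ 2) * qi Zv Tv = 0).

(* v(z,t) = exp(i C2 t^2/4 - C2 z/2) Q(Z(z), T(z,t)), real and imaginary parts *)
Definition v_re {R : realType} (C2 : R) (qr qi : R -> R -> R) (z t : R) : R :=
  let th := C2 / 4 * t ^+ 2 in
  expR (- (C2 / 2 * z)) *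
    (cos th * qr (Zmap C2 z) (Tmap C2 z t) - sin th * qi (Zmap C2 z) (Tmap C2 z t)).

Definition v_im {R : realType} (C2 : R) (qr qi : R -> R -> R) (z t : R) : R :=
  let th := C2 / 4 * t ^+ 2 in
  expR (- (C2 / 2 * z)) *
    (sin th * qr (Zmap C2 z) (Tmap C2 z t) + cos th * qi (Zmap C2 z) (Tmap C2 z t)).

From HB Require Import structures.
From mathcomp Require Import all_boot all_order all_algebra.
From mathcomp Require Import all_classical all_reals all_analysis.
From mathcomp Require Import ring.
From mathcomp Require Import measurable_realfun.
Import Order.TTheory GRing.Theory Num.Theory.
Import numFieldNormedType.Exports.
Local Open Scope classical_set_scope.
Local Open Scope ring_scope.

(* For fixed z, t^2 v(z,t) = c e^{i th(t)} (T^2 Q)(Z(z), a t) with a = e^{-C2 z},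
   c = e^{-C2 z/2} / a^2 and th(t) = C2 t^2/4.  Multiplication by a nonzero
   constant times a measurable unimodular phase, and dilation of the variable
   by a > 0, preserve membership in L^2(R) in both directions, and Z maps I
   onto I~.  The argument is pointwise in z, so the equations satisfied by Q
   and v (and the value of rho) play no role. *)

Section Dilation.
Context {R : realType}.
Local Notation mu := (@lebesgue_measure R).

Lemma preimage_mulrl_itvoc (a x y : R) : 0 < a ->
  ( *%R a) @^-1` `]x, y] = `]x / a, y / a]%classic.
Proof.
move=> a0; apply/seteqP; split => t /=;
  by rewrite !in_itv /= ltr_pdivrMr // ler_pdivlMr // [t * a]mulrC.
Qed.

Lemma ge0_integral_dilation (a : R) (g : R -> \bar R) : 0 < a ->
  measurable_fun [set: R] g -> (forall x, 0 <= g x)%E ->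
  (\int[mu]_x g (a * x)%R = a^-1%:E * \int[mu]_x g x)%E.
Proof.
move=> a0 mg g0.
have ma : measurable_fun [set: measurableTypeR R]
  (( *%R a) : measurableTypeR R -> measurableTypeR R) by exact: mulrl_measurable.
pose nu := mscale (NngNum (ltW a0))
  (measure_function_pushforward__canonical__measure_function_Measure mu ma).
have mu_nu : forall A, measurable A -> mu A = nu A.
  apply: lebesgue_measure_unique => //= _ [[x y]] _ <-.
  rewrite /nu /mscale /= /pushforward preimage_mulrl_itvoc //.
  rewrite !lebesgue_measure_itv /= !lte_fin ltr_pM2r ?invr_gt0 //.
  case: ifP => _; last by rewrite mule0.
  by rewrite -EFinM -!mulrBl mulrCA mulfV ?mulr1 // gt_eqF.
have -> : (\int[mu]_x g x = a%:E * \int[mu]_x g (a * x)%R)%E.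
  rewrite (eq_measure_integral nu); last by move=> A mA _; exact: mu_nu.
  by rewrite ge0_integral_mscale //= ge0_integral_pushforward.
by rewrite muleA -EFinM mulVf ?gt_eqF // mul1e.
Qed.

Lemma integrable_dilation (a : R) (h : R -> R) : 0 < a ->
  mu.-integrable setT (fun x => (h x)%:E) ->
  mu.-integrable setT (fun x => (h (a * x))%:E).
Proof.
move=> a0 /integrableP [/measurable_EFinP mh hfin]; apply/integrableP; split.
  by apply/measurable_EFinP; apply: measurableT_comp mh _; exact: mulrl_measurable.
rewrite (ge0_integral_dilation _ (fun x => `|(h x)%:E|%E) a0) //; last first.
  by apply: measurableT_comp => //; exact: measurableT_comp.
by apply: lte_mul_pinfty => //; rewrite lee_fin invr_ge0 ltW.
Qed.

End Dilation.

Section L2c_invariance.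
Context {R : realType}.
Implicit Types (fr fi th : R -> R) (a c : R).

Lemma eq_L2c fr fi gr gi : fr =1 gr -> fi =1 gi -> L2c fr fi -> L2c gr gi.
Proof. by move=> /funext-> /funext->. Qed.

Lemma L2c_dilation a fr fi : 0 < a ->
  L2c fr fi -> L2c (fun t => fr (a * t)) (fun t => fi (a * t)).
Proof.
move=> a0 [mfr [mfi fint]].
have ma : measurable_fun [set: R] ( *%R a) by exact: mulrl_measurable.
split; [exact: measurableT_comp|split; first exact: measurableT_comp].
exact: (integrable_dilation _ (fun x => fr x ^+ 2 + fi x ^+ 2)).
Qed.

Lemma L2c_dilation_iff a fr fi : 0 < a ->
  L2c (fun t => fr (a * t)) (fun t => fi (a * t)) <-> L2c fr fi.
Proof.
move=> a0; split; last exact: L2c_dilation.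
have ai0 : 0 < a^-1 by rewrite invr_gt0.
have aK t : a * (a^-1 * t) = t by rewrite mulrA mulfV ?mul1r // gt_eqF.
by move=> /(L2c_dilation _ _ _ ai0); apply: eq_L2c => t /=; rewrite aK.
Qed.

Lemma L2c_phase c th fr fi : measurable_fun [set: R] th ->
  L2c fr fi ->
  L2c (fun t => c * (cos (th t) * fr t - sin (th t) * fi t))
      (fun t => c * (sin (th t) * fr t + cos (th t) * fi t)).
Proof.
move=> mth [mfr [mfi fint]].
have mcos : measurable_fun [set: R] (fun t => cos (th t)).
  by apply: measurableT_comp mth; apply: continuous_measurable_fun;
     exact: continuous_cos.
have msin : measurable_fun [set: R] (fun t => sin (th t)).
  by apply: measurableT_comp mth; apply: continuous_measurable_fun;
     exact: continuous_sin.
split; [|split].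
- by apply: measurable_funM => //; apply: measurable_funB; exact: measurable_funM.
- by apply: measurable_funM => //; apply: measurable_funD; exact: measurable_funM.
- apply: (eq_integrable measurableT _ _ _ (integrableZl measurableT (c ^+ 2) fint)).
  move=> t _ /=; rewrite -EFinM; congr EFin.
  by rewrite -[LHS]mul1r -(cos2Dsin2 (th t)); ring.
Qed.

Lemma L2c_phase_iff c th fr fi : c != 0 -> measurable_fun [set: R] th ->
  L2c (fun t => c * (cos (th t) * fr t - sin (th t) * fi t))
      (fun t => c * (sin (th t) * fr t + cos (th t) * fi t)) <-> L2c fr fi.
Proof.
move=> c0 mth; split; last exact: L2c_phase.
have mNth : measurable_fun [set: R] (fun t => - th t).
  by apply: measurableT_comp mth; exact: oppr_measurable.
move=> /(L2c_phase c^-1 _ _ _ mNth); apply: eq_L2c => t /=;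
  by rewrite cosN sinN -[RHS]mul1r -(cos2Dsin2 (th t)); field.
Qed.

End L2c_invariance.

Lemma L2c_t2v_iff (R : realType) (C2 : R) (qr qi : R -> R -> R) (z : R) :
  L2c (fun t => t ^+ 2 * v_re C2 qr qi z t) (fun t => t ^+ 2 * v_im C2 qr qi z t) <->
  L2c (fun T => T ^+ 2 * qr (Zmap C2 z) T) (fun T => T ^+ 2 * qi (Zmap C2 z) T).
Proof.
set a := expR (- (C2 * z)); set c := expR (- (C2 / 2 * z)) / a ^+ 2.
have a0 : 0 < a by exact: expR_gt0.
have c0 : c != 0 by rewrite mulf_neq0 ?invr_eq0 ?expf_neq0 ?gt_eqF ?expR_gt0.
have mth : measurable_fun [set: R] (fun t : R => C2 / 4 * t ^+ 2).
  by apply: measurable_funM => //; exact: exprn_measurable.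
apply: iff_trans _ (L2c_dilation_iff _ _ _ a0).
apply: iff_trans _ (L2c_phase_iff c _ _ _ c0 mth).
have an0 : a != 0 by rewrite gt_eqF.
(* without [clearbody], [field] unfolds [a] and does not terminate in practice *)
by split; apply: eq_L2c => t; rewrite /v_re /v_im /Tmap -/a /c; clearbody a; field.
Qed.

Theorem lemma3p4p1 (R : realType) (C2 rho L : R) (qr qi : R -> R -> R) :
  0 < C2 -> (rho = 1 \/ rho = -1) -> 0 < L ->
  NLS_solution rho C2 L qr qi ->
  (forall z, z \in `[0, L] ->
     L2c (fun t => t ^+ 2 * v_re C2 qr qi z t) (fun t => t ^+ 2 * v_im C2 qr qi z t))
  <->
  (forall Zv, Itilde C2 L Zv ->
     L2c (fun Tv => Tv ^+ 2 * qr Zv Tv) (fun Tv => Tv ^+ 2 * qi Zv Tv)).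
Proof.
move=> _ _ _ _; split.
- by move=> t2v _ [z Iz <-]; apply/L2c_t2v_iff/t2v.
- by move=> t2Q z Iz; apply/L2c_t2v_iff/t2Q; exists z.
Qed.
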